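(* For all positive integers $k$, $\mathrm{opt}_{\mathrm{bs}}(k,2)\le \lceil k\ln k\rceil+2k$.
   Context: Let $F$ be a family of functions from a set $X$ to a set $Y$. Online learning of $F$ is a game between a learner and an adversary: the adversary secretly fixes some $f\in F$ and presents inputs $x_1,x_2,\dots\in X$ one at a time, chosen adaptively; after each input $x_t$ the learner guesses a value for $f(x_t)$. A mistake is an incorrect guess. In the standard model, after each guess the adversary reveals the true value $f(x_t)$; in the bandit model, the adversary only says YES (guess correct) or NO (guess incorrect). $\mathrm{opt}_{\mathrm{std}}(F)$ (resp. $\mathrm{opt}_{\mathrm{bs}}(F)$) is the maximum number of mistakes the learner makes in the standard (resp. bandit) model when both learner and adversary play optimally (the learner minimizing, the adversary maximizing, the adversary's answers required to be consistent with some $f\in F$). For positive integers $k,M$, $\mathrm{opt}_{\mathrm{bs}}(k,M)$ denotes the maximum of $\mathrm{opt}_{\mathrm{bs}}(F)$ over all families $F$ of functions (with arbitrary domain) with codomain $\{0,1,\dots,k-1\}$ and $\mathrm{opt}_{\mathrm{std}}(F)=M$. *)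

From Stdlib Require Import Reals.
From mathcomp Require Import all_boot.

Set Implicit Arguments.
Unset Strict Implicit.
Unset Printing Implicit Defensive.

(* A family of functions X -> {0,...,k-1}, given as a predicate on functions.
   It also serves as a "version space" (the functions still consistent). *)
Definition fam (X : Type) (k : nat) := (X -> 'I_k) -> Prop.

(* std_forces V m : in the STANDARD model, starting with version space V, the
   adversary has a strategy forcing at least m more mistakes, whatever the
   learner does.
   At the end the version space must be nonempty (answers consistent with some
   f in F). *)
Inductive std_forces (X : Type) (k : nat) : fam X k -> nat -> Prop :=
| std_done (V : fam X k) : (exists f, V f) -> std_forces V 0
| std_step (V : fam X k) (m : nat) (x : X) :
    (forall y : 'I_k, exists v : 'I_k,
        (exists f, V f /\ f x = v) /\
        ((v <> y /\ std_forces (fun f => V f /\ f x = v) m.-1) \/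
         (v = y /\ std_forces (fun f => V f /\ f x = v) m))) ->
    std_forces V m.

(* bs_forces V m : same in the BANDIT model: after the guess y the adversary
   only answers NO (a mistake; version space {f in V | f x <> y}) or YES
   (no mistake; version space {f in V | f x = y}). *)
Inductive bs_forces (X : Type) (k : nat) : fam X k -> nat -> Prop :=
| bs_done (V : fam X k) : (exists f, V f) -> bs_forces V 0
| bs_step (V : fam X k) (m : nat) (x : X) :
    (forall y : 'I_k,
        bs_forces (fun f => V f /\ f x <> y) m.-1 \/
        bs_forces (fun f => V f /\ f x = y) m) ->
    bs_forces V m.

Definition opt_std_eq (X : Type) (k : nat) (F : fam X k) (M : nat) : Prop :=
  std_forces F M /\ ~ std_forces F M.+1.

Definition opt_bs_le (X : Type) (k : nat) (F : fam X k) (N : nat) : Prop :=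
  ~ bs_forces F N.+1.

(* ceiling of a nonnegative real, as a nat: ceil r = - floor (- r) *)
Definition ceil_nat (r : R) : nat := Z.to_nat (- Int_part (- r))%Z.

(* Let opt_std(F) <= 2.  For a query x, at most one label y can leave a subfamily
   {f in F | f x = y} of standard mistake bound 2, since two such labels would
   let the standard adversary force 3 mistakes; the bandit learner guesses this
   y.  After the first NO the survivors lie in k-1 "pending" families of
   standard bound <= 1.  Such a family has, for every query, a label outside of
   which it contains at most one function per label, i.e. at most k-1
   functions; guessing that label, a NO turns the family into k-1 explicit
   functions.  Against n explicit functions the learner guesses the most
   popular label, so each mistake keeps at most a fraction (k-1)/k of them; as
   pending families and explicit functions together weigh at most k^2, after
   j = ceil(k ln k) such mistakes at most k functions remain, because
   (1 - 1/k)^j <= exp(-j/k) <= 1/k, and these cost fewer than k further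
   mistakes.  In total: 1 + (k-1) + j + (k-1) mistakes. *)

From Stdlib Require Import Reals ZArith Classical Lra.
From mathcomp Require Import all_boot zify.

Set Implicit Arguments.
Unset Strict Implicit.
Unset Printing Implicit Defensive.

Lemma exists_large_fiber (I J : finType) (g : I -> J) :
  0 < #|J| -> exists y, #|I| <= #|J| * #|[pred i | g i == y]|.
Proof.
move=> J_gt0; have [y max_y] := eq_bigmax (fun y => #|[pred i | g i == y]|) J_gt0.
exists y; rewrite -max_y -sum_nat_const -sum1_card (partition_big g predT) //=.
by apply: leq_sum => z _; rewrite sum1_card (leq_bigmax z).
Qed.

Lemma mem_rem_enum (T : finType) (y v : T) : (v \in rem y (enum T)) = (v != y).
Proof. by rewrite mem_rem_uniq ?enum_uniq // inE mem_enum andbT. Qed.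

Lemma size_rem_enum (T : finType) (y : T) : size (rem y (enum T)) = #|T|.-1.
Proof. by rewrite size_rem ?mem_enum // -cardE. Qed.

Section Game.

Variables (X : Type) (k : nat).
Hypothesis k_gt0 : 0 < k.
Implicit Types (V W Q S : fam X k) (f g : X -> 'I_k) (x : X) (y v : 'I_k).

(* Rocq derives no useful induction principle for [bs_forces]: its recursive
   occurrences are nested under [\/]. *)
Fixpoint bs_forces_strong_ind (Pr : fam X k -> nat -> Prop)
  (Pr0 : forall V, (exists f, V f) -> Pr V 0)
  (PrS : forall V m x, bs_forces V m ->
     (forall y,
        (bs_forces (fun f => V f /\ f x <> y) m.-1 /\ Pr (fun f => V f /\ f x <> y) m.-1) \/
        (bs_forces (fun f => V f /\ f x = y) m /\ Pr (fun f => V f /\ f x = y) m)) ->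
     Pr V m)
  V m (H : bs_forces V m) {struct H} : Pr V m :=
  match H in bs_forces V0 m0 return Pr V0 m0 with
  | bs_done V0 h => Pr0 V0 h
  | bs_step V0 m0 x h => PrS V0 m0 x (bs_step h) (fun y =>
      match h y with
      | or_introl h1 => or_introl (conj h1 (bs_forces_strong_ind Pr0 PrS h1))
      | or_intror h2 => or_intror (conj h2 (bs_forces_strong_ind Pr0 PrS h2))
      end)
  end.

Definition fam_card_le V n : Prop :=
  exists (I : finType) (r : I -> X -> 'I_k),
    #|I| <= n /\ forall f, V f -> exists i, f =1 r i.

Lemma fam_card_le_sub V W n :
  (forall f, W f -> V f) -> fam_card_le V n -> fam_card_le W n.
Proof. by move=> WV [I [r [cardI covV]]]; exists I, r; split=> // f /WV /covV. Qed.

Lemma fam_card_le0 : fam_card_le (fun _ => False) 0.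
Proof. by exists void, (fun i : void => match i with end); rewrite card_void. Qed.

Lemma fam_card_leU V W m n : fam_card_le V m -> fam_card_le W n ->
  fam_card_le (fun f => V f \/ W f) (m + n).
Proof.
move=> [I [r [cardI covV]]] [J [s [cardJ covW]]].
exists (I + J)%type; exists (fun ij => match ij with inl i => r i | inr j => s j end).
split; first by rewrite card_sum leq_add.
by move=> f [/covV [i fi] | /covW [j fj]]; [exists (inl i) | exists (inr j)].
Qed.

Lemma fam_card_le_labels Q x (s : seq 'I_k) n :
  (forall v, v \in s -> fam_card_le (fun f => Q f /\ f x = v) n) ->
  fam_card_le (fun f => Q f /\ f x \in s) (size s * n).
Proof.
elim: s => [|v s IHs] Qs.
  by apply: fam_card_le_sub fam_card_le0 => f [].
rewrite mulSn; apply: fam_card_le_sub (fam_card_leU (Qs v (mem_head v s)) (IHs _)).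
- by move=> f [Qf]; rewrite in_cons => /orP [/eqP | fx_s]; [left | right].
- by move=> w w_s; apply: Qs; rewrite in_cons w_s orbT.
Qed.

Lemma fam_card_le_majority V n x : fam_card_le V n ->
  exists y n', k * n' <= k.-1 * n /\ fam_card_le (fun f => V f /\ f x <> y) n'.
Proof.
move=> [I [r [cardI covV]]].
have card_k_gt0 : 0 < #|'I_k| by rewrite card_ord.
have [y] := exists_large_fiber (fun i => r i x) card_k_gt0; rewrite card_ord => cnt_y.
exists y, #|[pred i | r i x != y]|; split.
  have cardIy : #|[pred i | r i x == y]| + #|[pred i | r i x != y]| = #|I|.
    by rewrite -(cardC [pred i | r i x == y]); congr (_ + _); apply: eq_card.
  rewrite -(addKn #|[pred i | r i x == y]| #|[pred i | r i x != y]|) cardIy mulnBr.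
  apply: leq_trans (_ : k * #|I| - #|I| <= _); first exact: leq_sub2l.
  by rewrite -{2}[#|I|]mul1n -mulnBl subn1 leq_mul.
exists {i | r i x != y}, (fun i => r (val i)); split; first by rewrite card_sig.
move=> f [/covV [i fi] fxy].
have rixy : r i x != y by rewrite -fi; apply/eqP.
by exists (exist _ i rixy).
Qed.

Lemma std_forces_nonempty V m : std_forces V m -> exists f, V f.
Proof.
case=> [// | {}V {}m x Vx].
by have [v [[f [Vf _]] _]] := Vx (Ordinal k_gt0); exists f.
Qed.

Lemma std_forces_two_labels V x u w m : u != w ->
  std_forces (fun f => V f /\ f x = u) m -> std_forces (fun f => V f /\ f x = w) m ->
  std_forces V m.+1.
Proof.
move=> uw Vu Vw; apply: (std_step (x := x)) => y.
have [fu Vfu] := std_forces_nonempty Vu; have [fw Vfw] := std_forces_nonempty Vw.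
have [-> | yu] := eqVneq y u.
- by exists w; split; [exists fw | left; split=> //; apply/eqP; rewrite eq_sym].
- by exists u; split; [exists fu | left; split=> //; apply/eqP; rewrite eq_sym].
Qed.

Lemma not_std_forces_succ V m x : ~ std_forces V m.+1 ->
  exists y, forall v, v != y -> ~ std_forces (fun f => V f /\ f x = v) m.
Proof.
move=> noVm; case: (classic (exists y, std_forces (fun f => V f /\ f x = y) m)).
- move=> [y Vy]; exists y => v vy Vv; apply: noVm.
  exact: std_forces_two_labels vy Vv Vy.
- by move=> noV; exists (Ordinal k_gt0) => v _ Vv; apply: noV; exists v.
Qed.

Lemma not_std_forces1_card_le1 Q : ~ std_forces Q 1 -> fam_card_le Q 1.
Proof.
move=> noQ1; case: (classic (exists g, Q g)) => [[g Qg] | noQ].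
- exists unit, (fun _ => g); split; first by rewrite card_unit.
  move=> f Qf; exists tt => z; case: (eqVneq (f z) (g z)) => // fgz; case: noQ1.
  apply: (@std_forces_two_labels _ z (f z) (g z)) => //; apply: std_done.
  + by exists f.
  + by exists g.
- exists unit, (fun _ _ => Ordinal k_gt0); split; first by rewrite card_unit.
  by move=> f Qf; case: noQ; exists f.
Qed.

Lemma not_std_forces2_split Q x : ~ std_forces Q 2 ->
  exists y, fam_card_le (fun f => Q f /\ f x <> y) k.-1.
Proof.
move=> noQ2; have [y noQv] := not_std_forces_succ x noQ2; exists y.
have := @fam_card_le_labels Q x (rem y (enum 'I_k)) 1.
rewrite size_rem_enum card_ord muln1 => card_le; apply: fam_card_le_sub (card_le _).
- by move=> f [Qf fxy]; rewrite mem_rem_enum; split=> //; apply/eqP.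
- by move=> v; rewrite mem_rem_enum => vy; apply/not_std_forces1_card_le1/noQv.
Qed.

Lemma bs_forces_lt_card V m n : bs_forces V m -> fam_card_le V n -> m < n.
Proof.
move=> Vm; elim/bs_forces_strong_ind: V m / Vm n
  => [{}V [f Vf] {}n [I [r [cardI /(_ f Vf) [i _]]]] | {}V {}m x _ IH {}n Vn].
  by apply: leq_trans cardI; apply/card_gt0P; exists i.
have [y [n' [n'_le Vy]]] := fam_card_le_majority x Vn.
case: (IH y) => [[_ /(_ n' Vy) lt_m] | [_ IHy]]; last first.
  by apply: IHy; apply: fam_card_le_sub Vn => f [].
nia.
Qed.

Lemma bs_forces_lt_pow V m n j :
  bs_forces V m -> fam_card_le V n -> n * k.-1 ^ j <= k ^ j.+1 -> m < j + k.
Proof.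
move=> Vm; elim/bs_forces_strong_ind: V m / Vm n j
  => [{}V _ n j _ _ | {}V {}m x Vm IH n j Vn pow_n].
  by rewrite addn_gt0 k_gt0 orbT.
have [n_le_k | k_lt_n] := leqP n k.
  by have := bs_forces_lt_card Vm Vn; lia.
case: j pow_n => [|j] pow_n; first by rewrite muln1 expn1 in pow_n; lia.
have [y [n' [n'_le Vy]]] := fam_card_le_majority x Vn.
case: (IH y) => [[_ /(_ n' j Vy) IHy] | [_ IHy]]; last first.
  by apply: IHy pow_n; apply: fam_card_le_sub Vn => f [].
suff /IHy : n' * k.-1 ^ j <= k ^ j.+1 by lia.
rewrite -(leq_pmul2l k_gt0) mulnA (leq_trans (leq_mul n'_le (leqnn _))) //.
by rewrite -mulnA mulnCA -!expnS.
Qed.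

(* Each family of [s] costs at most one mistake before it is absorbed into [S]
   as [k.-1] explicit functions, hence its weight [k]. *)
Lemma bs_forces_lt_pending (I : eqType) (P : I -> fam X k) (s : seq I) j V m S n :
  (forall i, i \in s -> ~ std_forces (P i) 2) ->
  bs_forces V m -> fam_card_le S n ->
  (forall f, V f -> S f \/ exists2 i, i \in s & P i f) ->
  (k * size s + n) * k.-1 ^ j <= k ^ j.+1 -> m < size s + j + k.
Proof.
elim: s V m S n => [|i0 s IHs] V m S n Ps Vm Sn covV pow_n.
  rewrite muln0 add0n in pow_n; apply: (bs_forces_lt_pow Vm _ pow_n).
  by apply: fam_card_le_sub Sn => f /covV [// | [i]].
elim/bs_forces_strong_ind: V m / Vm covV => [{}V _ _ | {}V {}m x _ IH covV].
  by rewrite addn_gt0 k_gt0 orbT.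
have [y Py] := not_std_forces2_split x (Ps i0 (mem_head i0 s)).
case: (IH y) => [[Vy _] | [_ IHy]]; last by apply: IHy => f [/covV].
suff : m.-1 < size s + j + k by rewrite /=; lia.
apply: (IHs _ _ _ _ _ Vy (fam_card_leU Sn Py)).
- by move=> i i_s; apply: Ps; rewrite in_cons i_s orbT.
- move=> f [/covV [Sf | [i i_s Pif]] fxy]; first by left; left.
  move: i_s; rewrite in_cons => /orP [/eqP Ei | i_s]; last by right; exists i.
  by left; right; rewrite -Ei.
- by apply: leq_trans pow_n; rewrite leq_mul2r /= mulnS; apply/orP; right; lia.
Qed.

Lemma bs_forces_lt_std2 W j V m : k * k.-1 ^ j <= k ^ j -> ~ std_forces W 3 ->
  bs_forces V m -> (forall f, V f -> W f) -> m < j + 2 * k.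
Proof.
move=> pow_j noW3 Vm.
elim/bs_forces_strong_ind: V m / Vm => [{}V _ _ | {}V {}m x _ IH VW].
  by rewrite addn_gt0 muln_gt0 k_gt0 orbT.
have [y noWv] := not_std_forces_succ x noW3.
case: (IH y) => [[Vy _] | [_ IHy]]; last by apply: IHy => f [/VW].
suff : m.-1 < size (rem y (enum 'I_k)) + j + k by rewrite size_rem_enum card_ord; lia.
apply: (bs_forces_lt_pending (P := fun v f => W f /\ f x = v) _ Vy fam_card_le0).
- by move=> v; rewrite mem_rem_enum => /noWv.
- move=> f [/VW Wf fxy]; right; exists (f x) => //.
  by rewrite mem_rem_enum; apply/eqP.
- rewrite size_rem_enum card_ord addn0 -mulnA expnS leq_mul //.
  by apply: leq_trans pow_j; rewrite leq_mul ?leq_pred.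
Qed.

End Game.

Section RealBound.

Local Open Scope R_scope.

Lemma INR_expn m n : INR (m ^ n) = INR m ^ n.
Proof. by elim: n => [|n IHn] //; rewrite expnS mult_INR IHn. Qed.

Lemma ceil_nat_ge r : r <= INR (ceil_nat r).
Proof.
rewrite /ceil_nat; set z := (- Int_part (- r))%Z.
have r_le_z : r <= IZR z by have [] := base_Int_part (- r); rewrite /z opp_IZR; lra.
case: (Z_le_gt_dec 0 z) => [z_ge0 | /Z.gt_lt /IZR_lt z_lt0].
  by rewrite INR_IZR_INZ Z2Nat.id.
have := pos_INR (Z.to_nat z); lra.
Qed.

Lemma one_sub_inv_pow_le (K : R) j :
  1 <= K -> K * ln K <= INR j -> (1 - / K) ^ j <= / K.
Proof.
move=> K_ge1 j_ge.
have K_gt0 : 0 < K by lra.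
have invK_le1 : / K <= 1 by rewrite -Rinv_1; apply: Rinv_le_contravar; lra.
apply: (Rle_trans _ (exp (- / K) ^ j)).
  by apply: pow_incr; have := exp_ineq1_le (- / K); lra.
rewrite -Rpower_pow; last exact: exp_pos.
rewrite /Rpower ln_exp.
apply: (Rle_trans _ (exp (- ln K))); last by rewrite exp_Ropp exp_ln //; apply: Rle_refl.
have : ln K <= INR j * / K.
  apply: (Rmult_le_reg_l K) => //.
  by rewrite (Rmult_comm (INR j)) -Rmult_assoc Rinv_r; lra.
move/Ropp_le_contravar; rewrite Ropp_mult_distr_r.
case=> [lt | ->]; [exact/Rlt_le/exp_increasing | exact: Rle_refl].
Qed.

Lemma mul_pred_expn_le k j :
  (0 < k)%N -> INR k * ln (INR k) <= INR j -> (k * k.-1 ^ j <= k ^ j)%N.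
Proof.
move=> k_gt0 j_ge; apply/leP/INR_le; rewrite mult_INR !INR_expn.
have K_ge1 : 1 <= INR k by apply: (le_INR 1); apply/leP.
have pred_K : INR k.-1 = INR k * (1 - / INR k).
  have K_pred : INR k = INR k.-1 + 1 by rewrite -S_INR prednK.
  by rewrite K_pred; field; have := pos_INR k.-1; lra.
have r_le := one_sub_inv_pow_le K_ge1 j_ge.
rewrite pred_K Rpow_mult_distr -Rmult_assoc (Rmult_comm (INR k)) Rmult_assoc.
rewrite -[X in _ <= X]Rmult_1_r; apply: Rmult_le_compat_l; first by apply: pow_le; lra.
rewrite -[X in _ <= X](Rinv_r (INR k)); last lra.
by apply: Rmult_le_compat_l; lra.
Qed.

End RealBound.

Unset Implicit Arguments.

Theorem mainTheorem3 (k : nat) (hk : 0 < k) (X : Type) (F : fam X k) :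
  opt_std_eq F 2 ->
  opt_bs_le F (ceil_nat (Rmult (INR k) (ln (INR k))) + 2 * k).
Proof.
move=> [_ noF3] Fbs.
have pow_j := mul_pred_expn_le hk (ceil_nat_ge (INR k * ln (INR k))).
have := bs_forces_lt_std2 hk pow_j noF3 Fbs (fun f Ff => Ff).
lia.
Qed.
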